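(* Let $a\in\mathbb{N}$ and $X=\overline{a^{\mathbb{N}}}$ (closure in the $2$-adic topology on $\mathbb{N}\setminus2\mathbb{N}$). (1) If $a\in1+4\mathbb{N}$, then $X=1+2^{n(X)-2}\mathbb{N}_0$. (2) If $a\in3+4\mathbb{N}$, then $X=(1+2^{n(X)-1}\mathbb{N}_0)\cup(-1+2^{n(X)-2}+2^{n(X)-1}\mathbb{N}_0)$. In both cases $i(X)=2^{n(X)-3}$.
   Context: $\mathbb{N}=\{1,2,\dots\}$, $\mathbb{N}_0=\{0\}\cup\mathbb{N}$, $x^{\mathbb{N}}=\{x^k:k\in\mathbb{N}\}$, $c+d\mathbb{N}=\{c+dk:k\in\mathbb{N}\}$, $c+d\mathbb{N}_0=\{c+dk:k\in\mathbb{N}_0\}$. The $2$-adic topology on $\mathbb{N}\setminus2\mathbb{N}$ is generated by the sets $x+2^m\mathbb{N}_0$ ($x,m\in\mathbb{N}$). $\mathbb{Z}_{2^m}^\times$ is the unit group of $\mathbb{Z}/2^m\mathbb{Z}$, $\pi_m:\mathbb{N}\to\mathbb{Z}/2^m\mathbb{Z}$, $x\mapsto x+2^m\mathbb{Z}$. For $X$ of the form $\overline{b^{\mathbb{N}}}$ with $b$ odd, $b\neq 1$: $n(X)=\min\{m\in\mathbb{N}:X=\pi_m^{-1}(\pi_m(X)),\ |\pi_m(X)|\ge3\}$, and $i(X)$ is the index of the subgroup $\pi_{n(X)}(X)$ in $\mathbb{Z}_{2^{n(X)}}^\times$. *)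

From HB Require Import structures.
From mathcomp Require Import all_boot all_order all_algebra all_fingroup.
From mathcomp Require Import boolp.
Set Implicit Arguments. Unset Strict Implicit. Unset Printing Implicit Defensive.

(* Subsets of N are predicates nat -> Prop; N = {1,2,...}. *)

Definition pow_set (a : nat) : nat -> Prop := fun y => exists k, 0 < k /\ y = a ^ k.

(* The basic open set (x + 2^m N_0) of the 2-adic topology on N \ 2N,
   (as a subset of the space N \ 2N), for x, m in N. *)
Definition basic_open (x m : nat) : nat -> Prop :=
  fun y => odd y /\ exists k, y = x + 2 ^ m * k.

(* Closure in N \ 2N of S (for the topology generated by the basic open sets,
   which form a basis): y is a point of the space and every basic open set
   containing y meets S. *)
Definition closure2 (S : nat -> Prop) : nat -> Prop :=
  fun y => odd y /\
    forall x m, 0 < x -> 0 < m -> basic_open x m y ->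
      exists s, S s /\ odd s /\ basic_open x m s.

Definition saturated (X : nat -> Prop) (m : nat) : Prop :=
  forall y, 0 < y -> (exists x, X x /\ x = y %[mod 2 ^ m]) -> X y.

Definition three_residues (X : nat -> Prop) (m : nat) : Prop :=
  exists x1 x2 x3, [/\ X x1, X x2 & X x3] /\
    [/\ x1 %% 2 ^ m != x2 %% 2 ^ m, x1 %% 2 ^ m != x3 %% 2 ^ m
      & x2 %% 2 ^ m != x3 %% 2 ^ m].

Definition good_level (X : nat -> Prop) (m : nat) : Prop :=
  saturated X m /\ three_residues X m.

Definition is_nX (X : nat -> Prop) (n : nat) : Prop :=
  0 < n /\ good_level X n /\ forall m, 0 < m -> m < n -> ~ good_level X m.

Definition piX_units (X : nat -> Prop) (n : nat) : {set {unit 'Z_(2 ^ n)}} :=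
  [set u : {unit 'Z_(2 ^ n)} | `[< exists x, X x /\ ((x%:R)%R : 'Z_(2 ^ n)) = val u >]].

Definition index_X (X : nat -> Prop) (n : nat) : nat :=
  (#|[set: {unit 'Z_(2 ^ n)}] : piX_units X n|)%g.

From HB Require Import structures.
From mathcomp Require Import all_boot all_order all_algebra all_fingroup.
From mathcomp Require Import boolp.
From mathcomp Require Import zify ring.

(* Since odd powers have 2-power order modulo every 2^m, the closure of the
   powers of an odd a > 1 consists of the odd y that agree with some power of a
   modulo every 2^m.  If a = 1 + 2^w u with w >= 2 and u odd, then
   a^(2^j) = 1 + 2^(w+j) u' with u' odd, so lifting one bit at a time the powers
   of a reach every residue congruent to 1 modulo 2^w: the closure is
   1 + 2^w N_0.  If a = 3 (mod 4), then a^2 has that shape with w >= 3, and since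
   a can be divided out in the closure, the closure is the union of the classes
   of 1 and of a = 2^(w-1) - 1 modulo 2^w.  In both cases the closure is the
   preimage of a set of residues modulo 2^w which lifts to exactly four classes
   at level n(X) and to two classes one level lower; so pi_n(X) is a subgroup of
   order 4 of a group of order 2^(n-1), and i(X) = 2^(n-3). *)

Lemma eq_modP d x y : x = y %[mod d] <-> exists t1 t2, x + d * t1 = y + d * t2.
Proof.
split=> [E | [t1 [t2 E]]].
  exists (y %/ d), (x %/ d).
  by rewrite {1}(divn_eq x d) {2}(divn_eq y d) E; ring.
by rewrite -(modnMDl t1 x) -(modnMDl t2 y) addnC [in RHS]addnC mulnC (mulnC t2) E.
Qed.

Lemma eq_modM [d x1 y1 x2 y2 : nat] :
  x1 = y1 %[mod d] -> x2 = y2 %[mod d] -> x1 * x2 = y1 * y2 %[mod d].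
Proof. by move=> E1 E2; rewrite -modnMm E1 E2 modnMm. Qed.

Lemma eq_modX [d x y : nat] (k : nat) : x = y %[mod d] -> x ^ k = y ^ k %[mod d].
Proof. by move=> E; rewrite -modnXm E modnXm. Qed.

Lemma eq_mod_pow2 [m M x y : nat] :
  m <= M -> x = y %[mod 2 ^ M] -> x = y %[mod 2 ^ m].
Proof.
move=> le E; have dv : 2 ^ m %| 2 ^ M by rewrite dvdn_exp2l.
by rewrite -(modn_dvdm x dv) E modn_dvdm.
Qed.

Lemma eq_mod_odd [m x y : nat] : 0 < m -> x = y %[mod 2 ^ m] -> odd x = odd y.
Proof.
move=> m0 /(eq_mod_pow2 m0); rewrite expn1 !modn2 => /eqP.
by case: (odd x); case: (odd y).
Qed.

Lemma eq_mod_smallP c d y : c < d -> y %% d = c <-> exists k, y = c + d * k.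
Proof.
move=> cd; split=> [E | [k ->]].
  by exists (y %/ d); rewrite {1}(divn_eq y d) E addnC mulnC.
by rewrite addnC mulnC modnMDl modn_small.
Qed.

Lemma eq_mod_pow2S_cases [x y m : nat] : x = y %[mod 2 ^ m] ->
  x = y %[mod 2 ^ m.+1] \/ x + 2 ^ m = y %[mod 2 ^ m.+1].
Proof.
move=> /eq_modP [t1 [t2 E]].
have E2 : x + 2 ^ m * (t1 + t2) = y + 2 ^ m.+1 * t2.
  by rewrite mulnDr addnA E expnS; ring.
rewrite -(odd_double_half (t1 + t2)) -mul2n in E2.
case: (odd (t1 + t2)) E2 => /= E2; [right | left]; apply/eq_modP;
  by exists (t1 + t2)./2, t2; rewrite -E2 expnS; ring.
Qed.

Lemma pow2_mul_odd_mod m z : odd z -> 2 ^ m * z = 2 ^ m %[mod 2 ^ m.+1].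
Proof.
move=> oz; rewrite -(odd_double_half z) oz /= -muln2.
by rewrite (_ : _ * _ = z./2 * 2 ^ m.+1 + 2 ^ m) ?modnMDl // expnS; ring.
Qed.

Lemma sqr_eq1_mod_pow2S x s :
  0 < s -> x = 1 %[mod 2 ^ s] -> x ^ 2 = 1 %[mod 2 ^ s.+1].
Proof.
move=> s0 E; have ox : odd x by rewrite (eq_mod_odd s0 E).
have x0 : 0 < x by case: x ox {E}.
move: E => /eqP; rewrite eqn_mod_dvd // => dv1.
apply/eqP; rewrite eqn_mod_dvd ?expn_gt0 ?x0 //.
have -> : x ^ 2 - 1 = (x - 1) * (x + 1) by rewrite -subn_sqr exp1n.
rewrite expnSr.
by apply: dvdn_mul => //; rewrite dvdn2 addn1 /= ox.
Qed.

Lemma odd_exp2_modS a m : odd a -> a ^ (2 ^ m) = 1 %[mod 2 ^ m.+1].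
Proof.
move=> oa; elim: m => [|m IH]; first by rewrite !modn2 oa.
by rewrite expnS mulnC expnM; apply: sqr_eq1_mod_pow2S.
Qed.

Lemma odd_exp2_mod a m : odd a -> a ^ (2 ^ m) = 1 %[mod 2 ^ m].
Proof. by move=> oa; apply: eq_mod_pow2 (leqnSn m) (odd_exp2_modS a m oa). Qed.

Lemma exp2_gt1 [n] : 0 < n -> 1 < 2 ^ n.
Proof. by move=> n0; rewrite -{1}(expn0 2) ltn_exp2l. Qed.

Lemma odd_one_add_pow2 [w] u : 0 < w -> odd (1 + 2 ^ w * u).
Proof. by move=> w0; rewrite oddD oddM oddX (negbTE (lt0n_neq0 w0)). Qed.

Lemma one_add_pow2_gt1 w [u] : 0 < u -> 1 < 1 + 2 ^ w * u.
Proof. by move=> u0; rewrite -[X in X < _]addn0 ltn_add2l muln_gt0 expn_gt0 u0. Qed.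

Lemma exp2_one_add_pow2 w u j : 2 <= w -> odd u ->
  exists2 u', odd u' & (1 + 2 ^ w * u) ^ (2 ^ j) = 1 + 2 ^ (w + j) * u'.
Proof.
move=> w2 ou; elim: j => [|j [u' ou' E]]; first by exists u; rewrite ?addn0.
exists (u' + 2 ^ (w + j).-1 * u' ^ 2).
  by rewrite oddD oddM !oddX ou' (_ : (w + j).-1 == 0 = false) //; lia.
have Ep : w + j = (w + j).-1.+1 by lia.
rewrite [2 ^ j.+1]expnS [2 * 2 ^ j]mulnC expnM E addnS Ep !expnS; ring.
Qed.

Lemma one_add_pow2_exp_mod w u k : (1 + 2 ^ w * u) ^ k = 1 %[mod 2 ^ w].
Proof.
have E : 1 + 2 ^ w * u = 1 %[mod 2 ^ w] by rewrite addnC mulnC modnMDl.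
by rewrite (eq_modX k E) exp1n.
Qed.

Definition limit_of_powers (a y : nat) : Prop :=
  forall m, exists k, a ^ k = y %[mod 2 ^ m].

Lemma limit_of_powers1 a : limit_of_powers a 1.
Proof. by move=> m; exists 0. Qed.

Lemma limit_of_powersM a x y :
  limit_of_powers a x -> limit_of_powers a y -> limit_of_powers a (x * y).
Proof.
move=> Lx Ly m; have [k Ek] := Lx m; have [l El] := Ly m.
by exists (k + l); rewrite expnD; apply: eq_modM.
Qed.

Lemma limit_of_powers_sqr a y : limit_of_powers (a ^ 2) y -> limit_of_powers a y.
Proof. by move=> L m; have [k Ek] := L m; exists (2 * k); rewrite expnM. Qed.

Lemma limit_of_powers_divr a y :
  odd a -> limit_of_powers a (y * a) -> limit_of_powers a y.
Proof.
move=> oa L m; have [k Ek] := L m; exists (k + (2 ^ m).-1).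
rewrite expnD (eq_modM Ek (erefl (a ^ (2 ^ m).-1 %% 2 ^ m))).
rewrite -mulnA -expnS prednK ?expn_gt0 //.
by rewrite -modnMm (odd_exp2_mod a m oa) modnMm muln1.
Qed.

Lemma limit_of_powers_one_add w u y : 2 <= w -> odd u ->
  limit_of_powers (1 + 2 ^ w * u) y <-> y = 1 %[mod 2 ^ w].
Proof.
move=> w2 ou; have ob := odd_one_add_pow2 u (ltnW w2).
split=> [/(_ w) [k <-] | Hy m]; first exact: one_add_pow2_exp_mod.
elim: m => [|m [k IH]]; first by exists 0; rewrite !modn1.
have [le | lt] := leqP m.+1 w; first by exists 0; rewrite (eq_mod_pow2 le Hy).
case: (eq_mod_pow2S_cases IH) => [|IH']; first by exists k.
have [u' ou' Eu'] := exp2_one_add_pow2 w u (m - w) w2 ou.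
exists (k + 2 ^ (m - w)); rewrite -IH' expnD Eu' subnKC // mulnDr muln1.
apply/eqP; rewrite eqn_modDl; apply/eqP; rewrite mulnCA.
by apply: pow2_mul_odd_mod; rewrite oddM ou' oddX ob orbT.
Qed.

(* The even powers fill the class of 1 modulo [2 ^ w]; dividing by [a] (which is
   possible in the closure) shows that the odd ones fill the class of [a]. *)
Lemma limit_of_powers_sqr_one_add a w u y : 2 <= w -> odd u ->
  a ^ 2 = 1 + 2 ^ w * u ->
  limit_of_powers a y <-> y = 1 %[mod 2 ^ w] \/ y = a %[mod 2 ^ w].
Proof.
move=> w2 ou Ea2.
have : odd (a ^ 2) by rewrite Ea2 odd_one_add_pow2 // ltnW.
rewrite oddX /= => oa.
have sqr1 z : limit_of_powers (a ^ 2) z <-> z = 1 %[mod 2 ^ w].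
  by rewrite Ea2; apply: limit_of_powers_one_add.
split=> [/(_ w) [k <-] | [Hy | Hy]].
- have -> : a ^ k = a ^ odd k * (a ^ 2) ^ k./2.
    by rewrite -expnM -expnD mul2n odd_double_half.
  rewrite Ea2 (eq_modM (erefl (a ^ odd k %% 2 ^ w)) (one_add_pow2_exp_mod _ _ _)).
  rewrite muln1.
  by case: (odd k); [right; rewrite expn1 | left].
- exact/limit_of_powers_sqr/sqr1.
- apply/limit_of_powers_divr/limit_of_powers_sqr/sqr1 => //.
  by rewrite (eq_modM Hy (erefl (a %% 2 ^ w))) mulnn Ea2 addnC mulnC modnMDl.
Qed.

Lemma closure2_pow_setP a y : odd a -> 1 < a ->
  closure2 (pow_set a) y <-> odd y /\ limit_of_powers a y.
Proof.
move=> oa a1; split=> [[oy near_y] | [oy L]].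
  split=> // -[|m]; first by exists 0; rewrite !modn1.
  have y0 : 0 < y by case: y oy {near_y}.
  have [|s [[k [_ ->]] [_ [_ [t Et]]]]] := near_y y m.+1 y0 isT.
    by split=> //; exists 0; rewrite muln0 addn0.
  by exists k; rewrite Et addnC mulnC modnMDl.
split=> // x m x0 m0 [_ [t Ey]].
have [k Ek] := L m.
(* Shifting the exponent by a multiple of the period keeps the residue and
   makes the power exceed [y], hence [x]. *)
pose K := k + 2 ^ m * y.+1.
have EK : a ^ K = x %[mod 2 ^ m].
  rewrite expnD expnM (eq_modM Ek (eq_modX y.+1 (odd_exp2_mod a m oa))) exp1n muln1.
  by rewrite Ey addnC mulnC modnMDl.
have yK : y < a ^ K.
  apply: leq_trans (ltnW (ltn_expl K a1)); rewrite /K.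
  by apply: leq_trans (leq_addl _ _); apply: leq_pmull; rewrite expn_gt0.
exists (a ^ K); split; first by exists K; rewrite addn_gt0 muln_gt0 expn_gt0 orbT.
have oK : odd (a ^ K) by rewrite oddX oa orbT.
split=> //; split=> //.
have xK : x <= a ^ K by apply: leq_trans (ltnW yK); rewrite Ey leq_addr.
move/eqP: EK; rewrite eqn_mod_dvd // => /dvdnP [q Eq].
by exists q; rewrite mulnC -Eq subnKC.
Qed.

Lemma closure2_pow_set1 a : odd a -> 1 < a -> closure2 (pow_set a) 1.
Proof. by move=> oa a1; apply/closure2_pow_setP => //; split=> //; exact: limit_of_powers1. Qed.

Lemma closure2_pow_setM a x y : odd a -> 1 < a ->
  closure2 (pow_set a) x -> closure2 (pow_set a) y -> closure2 (pow_set a) (x * y).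
Proof.
move=> oa a1 /(closure2_pow_setP a x oa a1) [ox Lx].
move=> /(closure2_pow_setP a y oa a1) [oy Ly].
apply/closure2_pow_setP => //; rewrite oddM ox oy.
by split=> //; apply: limit_of_powersM.
Qed.

Definition lift_residues (d q : nat) (R : seq nat) : seq nat :=
  [seq r + d * i | r <- R, i <- iota 0 q].

Lemma size_lift_residues d q R : size (lift_residues d q R) = size R * q.
Proof. by rewrite size_allpairs size_iota. Qed.

Section LiftResidues.

Context {d q : nat} {R : seq nat}.
Hypothesis R_small : {in R, forall r, r < d}.

Lemma mem_lift_residues y : 0 < q ->
  (y %% (d * q) \in lift_residues d q R) = (y %% d \in R).
Proof.
move=> q0; set z := y %% (d * q).
have Ez : y %% d = z %% d by rewrite modn_dvdm // dvdn_mulr.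
apply/allpairsP/idP => [[[r i] [/= Rr _ Er]] | Ry].
  by rewrite Ez Er addnC mulnC modnMDl modn_small ?R_small.
have d0 : 0 < d := leq_ltn_trans (leq0n _) (R_small _ Ry).
exists (y %% d, z %/ d) => /=; split=> //.
  by rewrite mem_iota add0n ltn_divLR // mulnC ltn_pmod // muln_gt0 d0.
by rewrite Ez mulnC addnC -divn_eq.
Qed.

Lemma lift_residues_small s : s \in lift_residues d q R -> s < d * q.
Proof.
case/allpairsP => -[r i] [/= /R_small rd]; rewrite mem_iota add0n => /andP [_ iq] ->.
apply: leq_trans (_ : d * i.+1 <= d * q); last by rewrite leq_mul2l iq orbT.
by rewrite mulnS ltn_add2r.
Qed.

Lemma lift_residues_uniq : uniq R -> uniq (lift_residues d q R).
Proof.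
move=> Ru; apply: allpairs_uniq => //; first exact: iota_uniq.
move=> p1 p2 /allpairsP [[r1 i1] [/= /R_small r1d _ ->]].
move=> /allpairsP [[r2 i2] [/= /R_small r2d _ ->]] /= E.
have Er : r1 = r2.
  have := congr1 (modn^~ d) E.
  by rewrite /= ![_ + d * _]addnC ![d * _]mulnC !modnMDl !modn_small.
move: E; rewrite Er => /addnI /eqP.
by rewrite eqn_pmul2l ?(leq_ltn_trans (leq0n _) r1d) // => /eqP ->.
Qed.

Lemma lift_residues_odd : ~~ odd d -> all odd R -> all odd (lift_residues d q R).
Proof.
move=> de /allP Ro; apply/allP => _ /allpairsP [[r i] [/= Rr _ ->]].
by rewrite oddD oddM (negbTE de) addbF Ro.
Qed.

End LiftResidues.

Lemma not_three_residues (X : nat -> Prop) m M T : m <= M -> size T <= 2 ->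
  (forall x, X x -> x %% 2 ^ M \in T) -> ~ three_residues X m.
Proof.
move=> le T2 XT [x1 [x2 [x3 [[X1 X2 X3] [n12 n13 n23]]]]].
have neM x y : x %% 2 ^ m != y %% 2 ^ m -> x %% 2 ^ M != y %% 2 ^ M.
  by apply: contra => /eqP /(eq_mod_pow2 le) /eqP.
have /uniq_leq_size sub : uniq [:: x1 %% 2 ^ M; x2 %% 2 ^ M; x3 %% 2 ^ M].
  by rewrite /= !inE !negb_or !neM.
have : 3 <= size T by apply: sub => z; rewrite !inE => /or3P [] /eqP ->; apply: XT.
by rewrite leqNgt ltnS T2.
Qed.

Lemma piX_units_group_set [X : nat -> Prop] n :
  X 1 -> (forall x y, X x -> X y -> X (x * y)) -> group_set (piX_units X n).
Proof.
move=> X1 XM; apply/group_setP; split; first by rewrite inE; apply/asboolP; exists 1.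
move=> u v; rewrite !inE => /asboolP [x [Xx Ex]] /asboolP [y [Xy Ey]].
apply/asboolP; exists (x * y); split; first exact: XM.
by rewrite FinRing.val_unitM GRing.natrM Ex Ey.
Qed.

Section ResidueDescription.

Context {X : nat -> Prop} {n : nat} {S : seq nat}.
Hypothesis X_mod : forall y, X y <-> y %% 2 ^ n \in S.
Hypothesis S_small : {in S, forall s, s < 2 ^ n}.

Let X_residue s : s \in S -> X s.
Proof. by move=> Ss; apply/X_mod; rewrite modn_small ?S_small. Qed.

Lemma saturated_residues : saturated X n.
Proof. by move=> y _ [x [/X_mod Sx Exy]]; apply/X_mod; rewrite -Exy. Qed.

Lemma three_residues_of_size : uniq S -> 2 < size S -> three_residues X n.
Proof.
move=> Su S3; pose s i := nth 0 S i.
have Ss i : i < 3 -> s i \in S by move=> i3; apply/mem_nth/(leq_trans i3).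
have ne i j : i < 3 -> j < 3 -> i != j -> s i %% 2 ^ n != s j %% 2 ^ n.
  by move=> i3 j3; rewrite !modn_small ?S_small ?Ss // nth_uniq // (leq_trans _ S3).
exists (s 0), (s 1), (s 2); split; first by split; apply/X_residue/Ss.
by split; apply: ne.
Qed.

Lemma card_piX_units : 0 < n -> uniq S -> all odd S -> #|piX_units X n| = size S.
Proof.
move=> n0 Su /allP So; have n1 := exp2_gt1 n0.
pose v (u : {unit 'Z_(2 ^ n)}) : nat := val (val u).
have v_inj : injective v by move=> u1 u2 /val_inj /val_inj.
rewrite cardE -(size_map v); apply/perm_size/uniq_perm => //.
  by rewrite map_inj_uniq ?enum_uniq.
move=> s; apply/mapP/idP => [[u] | Ss].
  rewrite mem_enum inE => /asboolP [x [/X_mod Sx Ex]] ->.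
  by rewrite /v -Ex /= val_Zp_nat.
have un : ((s%:R : 'Z_(2 ^ n)) \is a GRing.unit)%R.
  by rewrite unitZpE // coprime_pexpl // coprime2n So.
exists (Sub (s%:R)%R un : {unit 'Z_(2 ^ n)}).
  by rewrite mem_enum inE; apply/asboolP; exists s; split; [exact: X_residue | rewrite SubK].
by rewrite /v SubK /= val_Zp_nat // modn_small ?S_small.
Qed.

Lemma index_X_residues : 0 < n -> uniq S -> all odd S ->
  X 1 -> (forall x y, X x -> X y -> X (x * y)) -> index_X X n = 2 ^ n.-1 %/ size S.
Proof.
move=> n0 Su So X1 XM.
pose H := Group (piX_units_group_set n X1 XM).
rewrite /index_X -(divgS (G := [set: _]%G) (H := H)) ?subsetT //=.
have := card_units_Zp (expn_gt0 2 n); rewrite /units_Zp => ->.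
by rewrite card_piX_units // totient_pfactor // mul1n.
Qed.

End ResidueDescription.

Theorem is_nX_index_lift_residues (X : nat -> Prop) w j R :
  1 < w -> 0 < j -> size R * 2 ^ j = 4 ->
  uniq R -> all odd R -> {in R, forall r, r < 2 ^ w} ->
  X 1 -> (forall x y, X x -> X y -> X (x * y)) ->
  (forall y, X y <-> y %% 2 ^ w \in R) ->
  is_nX X (w + j) /\ index_X X (w + j) = 2 ^ (w + j - 3).
Proof.
move=> w1 j0 R4 Ru Ro Rs X1 XM XR.
have X_lift i y : X y <-> y %% 2 ^ (w + i) \in lift_residues (2 ^ w) (2 ^ i) R.
  by rewrite expnD mem_lift_residues ?expn_gt0 //; apply: XR.
pose S := lift_residues (2 ^ w) (2 ^ j) R.
have Ss : {in S, forall s, s < 2 ^ (w + j)}.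
  by move=> s /(lift_residues_small Rs); rewrite expnD.
have Su : uniq S := lift_residues_uniq Rs Ru.
have So : all odd S by apply: lift_residues_odd; rewrite // oddX orbF -lt0n ltnW.
have S4 : size S = 4 by rewrite size_lift_residues.
split; last first.
  rewrite (index_X_residues (X_lift j) Ss) ?S4 ?addn_gt0 ?j0 ?orbT //.
  by rewrite (_ : (w + j).-1 = w + j - 3 + 2) ?expnD ?mulnK //; lia.
split; first by rewrite addn_gt0 j0 orbT.
split; first split.
- exact: (saturated_residues (X_lift j)).
- by apply: (three_residues_of_size (X_lift j) Ss); rewrite ?S4.
- (* One level below [w + j] only [size R * 2 ^ j.-1 = 2] residues are left. *)
  move=> m _ lt [_].
  apply: (@not_three_residues _ _ (w + j.-1) (lift_residues (2 ^ w) (2 ^ j.-1) R)).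
  + by rewrite -ltnS -addnS prednK.
  + rewrite size_lift_residues -(leq_pmul2r (isT : 0 < 2)) -mulnA -expnSr.
    by rewrite prednK ?R4.
  + by move=> x /(X_lift j.-1).
Qed.

Lemma closure2_pow_one_add w u y : 2 <= w -> odd u ->
  closure2 (pow_set (1 + 2 ^ w * u)) y <-> y %% 2 ^ w = 1.
Proof.
move=> w2 ou; have w0 : 0 < w := ltnW w2.
have one : 1 %% 2 ^ w = 1 := modn_small (exp2_gt1 w0).
have a1 := one_add_pow2_gt1 w (odd_gt0 ou).
rewrite (closure2_pow_setP _ _ (odd_one_add_pow2 u w0) a1); split=> [[_ L] | Hy].
  by rewrite -[RHS]one; apply/(limit_of_powers_one_add _ _ _ w2 ou).
have Hy' : y = 1 %[mod 2 ^ w] by rewrite one.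
by split; [rewrite (eq_mod_odd w0 Hy') | apply/limit_of_powers_one_add].
Qed.

Lemma closure2_pow_sqr_one_add a w u y : 2 <= w -> odd u ->
  a ^ 2 = 1 + 2 ^ w * u ->
  closure2 (pow_set a) y <-> y %% 2 ^ w = 1 \/ y %% 2 ^ w = a %% 2 ^ w.
Proof.
move=> w2 ou Ea2; have w0 : 0 < w := ltnW w2.
have one : 1 %% 2 ^ w = 1 := modn_small (exp2_gt1 w0).
have : odd (a ^ 2) by rewrite Ea2 odd_one_add_pow2.
rewrite oddX /= => oa.
have a1 : 1 < a by rewrite -ltn_sqr exp1n Ea2 one_add_pow2_gt1 ?odd_gt0.
have limE := limit_of_powers_sqr_one_add a w u y w2 ou Ea2.
rewrite closure2_pow_setP //; split=> [[_ /limE] | Hy]; first by rewrite one.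
have Hy' : y = 1 %[mod 2 ^ w] \/ y = a %[mod 2 ^ w] by rewrite one.
by split; [case: Hy' => /(eq_mod_odd w0) -> | apply/limE].
Qed.

Lemma nX_closure2_pow_one_add w u : 2 <= w -> odd u ->
  let X := closure2 (pow_set (1 + 2 ^ w * u)) in
  exists n, is_nX X n /\
    (forall y, X y <-> exists k, y = 1 + 2 ^ (n - 2) * k) /\
    index_X X n = 2 ^ (n - 3).
Proof.
move=> w2 ou X; have w0 : 0 < w := ltnW w2.
have w1 := exp2_gt1 w0.
have oa := odd_one_add_pow2 u w0.
have a1 := one_add_pow2_gt1 w (odd_gt0 ou).
have XE y : X y <-> y %% 2 ^ w = 1 := closure2_pow_one_add w u y w2 ou.
have [nX iX] : is_nX X (w + 2) /\ index_X X (w + 2) = 2 ^ (w + 2 - 3).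
  apply: (@is_nX_index_lift_residues X w 2 [:: 1]) => //.
  - by move=> r; rewrite mem_seq1 => /eqP ->.
  - exact: closure2_pow_set1.
  - by move=> x y; apply: closure2_pow_setM.
  - by move=> y; rewrite XE mem_seq1; split=> /eqP.
exists (w + 2); split=> //; split=> // y.
by rewrite XE addnK; apply: eq_mod_smallP.
Qed.

Lemma sqr_3add4 [k e u : nat] : k.+1 = 2 ^ e * u ->
  (3 + 4 * k) ^ 2 = 1 + 2 ^ e.+3 * ((1 + 2 * k) * u).
Proof.
move=> Ek; rewrite (_ : (3 + 4 * k) ^ 2 = 1 + 8 * (1 + 2 * k) * k.+1); last ring.
by rewrite Ek !expnS; ring.
Qed.

Lemma mod_3add4 [k e u : nat] : odd u -> k.+1 = 2 ^ e * u ->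
  (3 + 4 * k) %% 2 ^ e.+3 = 2 ^ e.+2 - 1.
Proof.
move=> ou Ek; have P0 : 0 < 2 ^ e by rewrite expn_gt0.
rewrite -(odd_double_half u) ou -mul2n in Ek.
have -> : 3 + 4 * k = 2 ^ e.+2 - 1 + u./2 * 2 ^ e.+3 by rewrite !expnS; nia.
by rewrite addnC modnMDl modn_small // !expnS; lia.
Qed.

Lemma nX_closure2_pow_3mod4 k e u : odd u -> k.+1 = 2 ^ e * u ->
  let X := closure2 (pow_set (3 + 4 * k)) in
  exists n, is_nX X n /\
    (forall y, X y <->
       (exists k, y = 1 + 2 ^ (n - 1) * k) \/
       (exists k, y = (2 ^ (n - 2) - 1) + 2 ^ (n - 1) * k)) /\
    index_X X n = 2 ^ (n - 3).
Proof.
move=> ou Ek X; set a := 3 + 4 * k; set w := e.+3; set c := 2 ^ e.+2 - 1.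
have P0 : 0 < 2 ^ e by rewrite expn_gt0.
have oa : odd a by rewrite /a oddD oddM.
have XE y : X y <-> y %% 2 ^ w = 1 \/ y %% 2 ^ w = c.
  rewrite /c -(mod_3add4 ou Ek); apply: closure2_pow_sqr_one_add (sqr_3add4 Ek) => //.
  by rewrite oddM oddD oddM ou.
have one_small : 1 < 2 ^ w by rewrite /w !expnS; lia.
have c_small : c < 2 ^ w by rewrite /c /w !expnS; lia.
have [nX iX] : is_nX X (w + 1) /\ index_X X (w + 1) = 2 ^ (w + 1 - 3).
  apply: (@is_nX_index_lift_residues X w 1 [:: 1; c]) => //.
  - by rewrite /= inE andbT /c !expnS; lia.
  - by rewrite /= /c oddB ?expn_gt0 // oddX.
  - by move=> r; rewrite !inE => /orP [] /eqP ->.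
  - exact: closure2_pow_set1.
  - by move=> x y; apply: closure2_pow_setM.
  - move=> y; rewrite XE !inE.
    by split=> [[] -> | /orP [] /eqP]; rewrite ?eqxx ?orbT; auto.
exists (w + 1); split=> //; split=> // y.
rewrite XE addnK (_ : w + 1 - 2 = e.+2); last by rewrite addn1.
by split=> [[] /eq_mod_smallP | [] /eq_mod_smallP]; auto.
Qed.

Theorem lemma4p6 (a : nat) :
  ((exists k, 0 < k /\ a = 1 + 4 * k) ->
    exists n, is_nX (closure2 (pow_set a)) n /\
      (forall y, closure2 (pow_set a) y <-> exists k, y = 1 + 2 ^ (n - 2) * k) /\
      index_X (closure2 (pow_set a)) n = 2 ^ (n - 3)) /\
  ((exists k, 0 < k /\ a = 3 + 4 * k) ->
    exists n, is_nX (closure2 (pow_set a)) n /\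
      (forall y, closure2 (pow_set a) y <->
         (exists k, y = 1 + 2 ^ (n - 1) * k) \/
         (exists k, y = (2 ^ (n - 2) - 1) + 2 ^ (n - 1) * k)) /\
      index_X (closure2 (pow_set a)) n = 2 ^ (n - 3)).
Proof.
split=> -[k [k0 ->]].
  have [u ou Ek] := pfactor_coprime (isT : prime 2) k0.
  have -> : 1 + 4 * k = 1 + 2 ^ (logn 2 k).+2 * u by rewrite {1}Ek !expnS; ring.
  by apply: nX_closure2_pow_one_add; rewrite // -coprime2n.
have [u ou Ek] := pfactor_coprime (isT : prime 2) (ltn0Sn k).
by apply: (@nX_closure2_pow_3mod4 k (logn 2 k.+1) u); rewrite -?coprime2n // mulnC.
Qed.
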